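(* For $n\ge0$, let $NC_n$ be the dg nilCoxeter algebra over $\mathbb{F}_2$. Then the Grothendieck group $K_0(H(\overline{NC_n}))$ of the homotopy category $H(\overline{NC_n})$ is isomorphic to $\mathbb{Z}$ for $n\in\{0,1\}$ and is zero for $n\ge2$. Consequently $K_0^{\mathbb{F}_2}(H(\overline{NC_n}))\cong\mathbb{F}_2$ for $n\in\{0,1\}$ and $0$ for $n\ge 2$.
   Context: $NC_n$ is the $\mathbb{F}_2$-algebra generated by $\tau_1,\ldots,\tau_{n-1}$ subject to $\tau_i^2=0$, $\tau_i\tau_j=\tau_j\tau_i$ for $|i-j|>1$, and $\tau_i\tau_{i+1}\tau_i=\tau_{i+1}\tau_i\tau_{i+1}$, with each $\tau_i$ in cohomological degree $-1$ and differential determined by $d(\tau_i)=1$ and the Leibniz rule (it has a basis indexed by permutations of $n$ letters; $NC_0=NC_1=\mathbb{F}_2$). It is the endomorphism algebra of $e^{\otimes n}$ in Khovanov's dg monoidal category $\mathcal{U}$. Viewing $NC_n$ as a one-object dg category, $\overline{NC_n}$ is the smallest full dg subcategory of left dg $NC_n$-modules containing the free module $NC_n$ and closed under mapping cones, isomorphisms and degree shifts; $H(\overline{NC_n})$ is its homotopy category (a triangulated category) and $K_0$ is its Grothendieck group. For a category $\mathcal{C}$ with distinguished triangles, $K_0^{\mathbb{F}_2}(\mathcal{C})$ is the $\mathbb{F}_2$-vector space on isomorphism classes of objects modulo $[X]+[Y]+[Z]=0$ for every distinguished triangle. *)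

From HB Require Import structures.
From mathcomp Require Import all_boot all_order all_algebra.
Unset Printing Implicit Defensive.
Import Order.TTheory GRing.Theory Num.Theory.
Local Open Scope ring_scope.

(* Finite-dimensional left dg modules over the dg nilCoxeter algebra NC_n   *)
(* over F_2, presented by generators tau_1..tau_(n-1) (indexed by 'I_n.-1). *)
(* A module is a graded F_2-vector space F_2^dim with a homogeneous basis:  *)
(* basis vector a has cohomological degree [deg a].  Linear maps act on row *)
(* vectors from the right (x |-> x *m A), so the left action                *)
(* tau_i (tau_j x) corresponds to x *m tau j *m tau i.                      *)
Record dgmod (n : nat) := DGMod {
  dim : nat;
  deg : 'I_dim -> int;
  dmx : 'M['F_2]_dim;
  tau : 'I_n.-1 -> 'M['F_2]_dim
}.
Arguments dim {n} d.
Arguments deg {n} d _.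
Arguments dmx {n} d.
Arguments tau {n} d _.

(* Axioms: d has degree +1, tau_i degree -1, d^2 = 0, the nilCoxeter       *)
(* relations, and the Leibniz rule d(tau_i x) = d(tau_i) x + tau_i dx       *)
(*   = x + tau_i dx   (signs are irrelevant in characteristic 2).           *)
Definition is_dgmod {n} (M : dgmod n) : Prop :=
  (forall a b, dmx M a b != 0 -> deg M b = deg M a + 1) /\
  (forall i a b, tau M i a b != 0 -> deg M b = deg M a - 1) /\
  dmx M *m dmx M = 0 /\
  (forall i, tau M i *m tau M i = 0) /\
  (forall i, tau M i *m dmx M = 1%:M + dmx M *m tau M i) /\
  (forall i j : 'I_n.-1, (i.+1 < j)%N || (j.+1 < i)%N ->
       tau M i *m tau M j = tau M j *m tau M i) /\
  (forall i j : 'I_n.-1, val j = (val i).+1 ->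
       tau M i *m tau M j *m tau M i = tau M j *m tau M i *m tau M j).

(* Morphisms of dg modules of degree k (module maps; no signs in char 2). *)
Definition hom_deg {n} (X Y : dgmod n) (k : int) (F : 'M['F_2]_(dim X, dim Y)) : Prop :=
  (forall a b, F a b != 0 -> deg Y b = deg X a + k) /\
  (forall i, tau X i *m F = F *m tau Y i).

Definition closed_hom {n} (X Y : dgmod n) (F : 'M['F_2]_(dim X, dim Y)) : Prop :=
  hom_deg X Y 0 F /\ dmx X *m F = F *m dmx Y.

Definition null_homotopic {n} (X Y : dgmod n) (F : 'M['F_2]_(dim X, dim Y)) : Prop :=
  exists H : 'M['F_2]_(dim X, dim Y),
    hom_deg X Y (-1) H /\ F = dmx X *m H + H *m dmx Y.

Definition dg_iso {n} (X Y : dgmod n) : Prop :=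
  exists (F : 'M['F_2]_(dim X, dim Y)) (G : 'M['F_2]_(dim Y, dim X)),
    [/\ closed_hom X Y F, closed_hom Y X G, F *m G = 1%:M & G *m F = 1%:M].

Definition homotopy_equiv {n} (X Y : dgmod n) : Prop :=
  exists (F : 'M['F_2]_(dim X, dim Y)) (G : 'M['F_2]_(dim Y, dim X)),
    [/\ closed_hom X Y F, closed_hom Y X G,
        null_homotopic X X (F *m G - 1%:M) & null_homotopic Y Y (G *m F - 1%:M)].

(* Degree shift X[k], with X[k]^j = X^(j+k). *)
Definition shift {n} (k : int) (X : dgmod n) : dgmod n :=
  @DGMod n (dim X) (fun a => deg X a - k) (dmx X) (tau X).

(* Mapping cone of F : X -> Y : Cone(F) = X[1] (+) Y, d(x,y) = (dx, Fx + dy). *)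
Definition cone {n} {X Y : dgmod n} (F : 'M['F_2]_(dim X, dim Y)) : dgmod n :=
  @DGMod n (dim X + dim Y)
    (fun i => match split i with inl a => deg X a - 1 | inr b => deg Y b end)
    (block_mx (dmx X) F 0 (dmx Y))
    (fun i => block_mx (tau X i) 0 0 (tau Y i)).

Definition deg0_cycle {n} (M : dgmod n) (g : 'rV['F_2]_(dim M)) : Prop :=
  (forall a, g 0 a != 0 -> deg M a = 0) /\ g *m dmx M = 0.

(* The free module NC_n (generated by 1, a degree-0 cycle), characterized up *)
(* to dg isomorphism by its universal property: closed degree-0 maps         *)
(* NC_n -> N correspond bijectively to degree-0 cycles of N (via g |-> image *)
(* of the generator).                                                        *)
Definition is_free_NC {n} (M : dgmod n) : Prop :=
  is_dgmod M /\
  exists g : 'rV['F_2]_(dim M), deg0_cycle M g /\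
    forall N : dgmod n, is_dgmod N -> forall y : 'rV['F_2]_(dim N), deg0_cycle N y ->
      exists! F : 'M['F_2]_(dim M, dim N), closed_hom M N F /\ g *m F = y.

Inductive inNCbar {n : nat} : dgmod n -> Prop :=
  | NCbar_free M : is_free_NC M -> inNCbar M
  | NCbar_cone X Y (F : 'M['F_2]_(dim X, dim Y)) :
      inNCbar X -> inNCbar Y -> closed_hom X Y F -> inNCbar (cone F)
  | NCbar_iso X Y : inNCbar X -> is_dgmod Y -> dg_iso X Y -> inNCbar Y
  | NCbar_shift X k : inNCbar X -> inNCbar (shift k X).

(* Additive invariants of H(bar NC_n) with values in an abelian group G:    *)
(* constant on isomorphism classes of H, and [Y] = [X] + [Cone f] for every *)
(* (standard) distinguished triangle X -> Y -> Cone f -> X[1]; every        *)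
(* distinguished triangle is by definition isomorphic in H to such a one.   *)
Definition K0_invariant {n} (G : zmodType) (f : dgmod n -> G) : Prop :=
  (forall X Y, inNCbar X -> inNCbar Y -> homotopy_equiv X Y -> f X = f Y) /\
  (forall X Y (F : 'M['F_2]_(dim X, dim Y)), inNCbar X -> inNCbar Y ->
      closed_hom X Y F -> f Y = f X + f (cone F)).

Definition K0F2_invariant {n} (V : lmodType 'F_2) (f : dgmod n -> V) : Prop :=
  (forall X Y, inNCbar X -> inNCbar Y -> homotopy_equiv X Y -> f X = f Y) /\
  (forall X Y (F : 'M['F_2]_(dim X, dim Y)), inNCbar X -> inNCbar Y ->
      closed_hom X Y F -> f X + f Y + f (cone F) = 0).

(* K_0(H(bar NC_n)) is the universal additive invariant.                    *)
(* K_0 ~= Z : there is an int-valued invariant chi through which every      *)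
(* invariant factors uniquely (Hom(Z,G) ~= G via the image of 1).           *)
Definition K0_iso_Z n : Prop :=
  exists chi : dgmod n -> int, K0_invariant int chi /\
    forall (G : zmodType) (f : dgmod n -> G), K0_invariant G f ->
      exists! g : G, forall X, inNCbar X -> f X = g *~ chi X.

Definition K0_zero n : Prop :=
  forall (G : zmodType) (f : dgmod n -> G), K0_invariant G f ->
    forall X, inNCbar X -> f X = 0.

Definition K0F2_iso_F2 n : Prop :=
  exists chi : dgmod n -> 'F_2, K0F2_invariant (GRing.regular 'F_2) chi /\
    forall (V : lmodType 'F_2) (f : dgmod n -> V), K0F2_invariant V f ->
      exists! v : V, forall X, inNCbar X -> f X = chi X *: v.

Definition K0F2_zero n : Prop :=
  forall (V : lmodType 'F_2) (f : dgmod n -> V), K0F2_invariant V f ->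
    forall X, inNCbar X -> f X = 0.

(* For n >= 2, the Leibniz rule d(tau_1) = 1 makes right multiplication by tau_1
   a contracting homotopy of the free module NC_n; contractible modules are
   closed under cones, shifts and isomorphisms, so every object of bar(NC_n) is
   zero in the homotopy category and every additive invariant vanishes on it.
   For n <= 1, NC_n is F_2 in degree 0 and the Euler characteristic
   chi X = sum of (-1)^deg over a homogeneous basis is additive on cones.  A
   contraction identifies the cycles of each degree with the boundaries from the
   degree below, so chi vanishes on contractible modules, hence (through the
   cone of a homotopy equivalence) chi is a homotopy invariant.  Induction over
   the generation of bar(NC_n) then gives f X = chi X * f(NC_n) for every
   additive invariant f. *)

From mathcomp Require Import all_boot all_algebra zify ring.
From Stdlib Require Import FunctionalExtensionality.
Import GRing.Theory.
Local Open Scope ring_scope.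
Set Implicit Arguments. Unset Strict Implicit.

Lemma addrr_F2 (V : lmodType 'F_2) (v : V) : v + v = 0.
Proof. by rewrite -[v]scale1r -scalerDl GRing.addrr_pchar2 ?scale0r. Qed.

Lemma opprF2 (V : lmodType 'F_2) (v : V) : - v = v.
Proof. by apply/esym/eqP; rewrite -subr_eq0 opprK addrr_F2. Qed.

Lemma addr_eq0F2 (V : lmodType 'F_2) (u v : V) : u + v = 0 -> u = v.
Proof. by move/eqP; rewrite addr_eq0 opprF2 => /eqP. Qed.

Definition homog m p (dX : 'I_m -> int) (dY : 'I_p -> int) (k : int)
    (A : 'M['F_2]_(m, p)) :=
  forall a b, A a b != 0 -> dY b = dX a + k.

Section Homogeneous.

Variables (m p q : nat) (dX : 'I_m -> int) (dY : 'I_p -> int) (dZ : 'I_q -> int).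

Lemma homog0 k : homog dX dY k 0.
Proof. by move=> a b; rewrite mxE eqxx. Qed.

Lemma homog1 : homog dX dX 0 1%:M.
Proof.
move=> a b; rewrite mxE; case: (eqVneq a b) => [->|]; first by rewrite addr0.
by rewrite mulr0n eqxx.
Qed.

Lemma homogD k (A B : 'M_(m, p)) :
  homog dX dY k A -> homog dX dY k B -> homog dX dY k (A + B).
Proof.
move=> hA hB a b; rewrite mxE.
by case: (eqVneq (A a b) 0) => [->|/hA //]; rewrite add0r; apply: hB.
Qed.

Lemma homogM k l (A : 'M_(m, p)) (B : 'M_(p, q)) :
  homog dX dY k A -> homog dY dZ l B -> homog dX dZ (k + l) (A *m B).
Proof.
move=> hA hB a c; rewrite mxE => nz.
have [b /andP [Aab Bbc]] : exists b, (A a b != 0) && (B b c != 0).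
  apply/existsP; apply: contraNT nz; rewrite negb_exists => /forallP AB0.
  apply/eqP; apply: big1 => b _; move: (AB0 b); rewrite negb_and !negbK.
  by case/orP => /eqP ->; rewrite ?mul0r ?mulr0.
by rewrite (hB _ _ Bbc) (hA _ _ Aab) addrA.
Qed.

End Homogeneous.

Lemma homog_regrade m p dX dY k dX' dY' k' (A : 'M_(m, p)) :
  homog dX dY k A -> (forall a b, dY b = dX a + k -> dY' b = dX' a + k') ->
  homog dX' dY' k' A.
Proof. by move=> hA H a b /hA /H. Qed.

Definition sum_grading m p (dX : 'I_m -> int) (dY : 'I_p -> int) (i : 'I_(m + p)) :=
  match split i with inl a => dX a | inr b => dY b end.

Section BlockHomogeneous.

Variables (m1 m2 p1 p2 : nat) (f1 : 'I_m1 -> int) (f2 : 'I_m2 -> int).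
Variables (g1 : 'I_p1 -> int) (g2 : 'I_p2 -> int) (k : int).

Lemma homog_col (A : 'M_(m1, p1)) (B : 'M_(m2, p1)) :
  homog f1 g1 k A -> homog f2 g1 k B -> homog (sum_grading f1 f2) g1 k (col_mx A B).
Proof.
move=> hA hB i b; rewrite /sum_grading; case: split_ordP => a ->.
  by rewrite col_mxEu; apply: hA.
by rewrite col_mxEd; apply: hB.
Qed.

Lemma homog_row (A : 'M_(m1, p1)) (B : 'M_(m1, p2)) :
  homog f1 g1 k A -> homog f1 g2 k B -> homog f1 (sum_grading g1 g2) k (row_mx A B).
Proof.
move=> hA hB a i; rewrite /sum_grading; case: split_ordP => b ->.
  by rewrite row_mxEl; apply: hA.
by rewrite row_mxEr; apply: hB.
Qed.

Lemma homog_lsub (A : 'M_(m1, p1 + p2)) :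
  homog f1 (sum_grading g1 g2) k A -> homog f1 g1 k (lsubmx A).
Proof.
move=> hA a b; rewrite mxE => /hA; rewrite /sum_grading.
by case: split_ordP => c /eqP; rewrite eq_shift // => /eqP <-.
Qed.

Lemma homog_rsub (A : 'M_(m1, p1 + p2)) :
  homog f1 (sum_grading g1 g2) k A -> homog f1 g2 k (rsubmx A).
Proof.
move=> hA a b; rewrite mxE => /hA; rewrite /sum_grading.
by case: split_ordP => c /eqP; rewrite eq_shift // => /eqP <-.
Qed.

End BlockHomogeneous.

Lemma homog_block m1 m2 p1 p2 f1 f2 g1 g2 k (A : 'M_(m1, p1)) B C (D : 'M_(m2, p2)) :
  homog f1 g1 k A -> homog f1 g2 k B -> homog f2 g1 k C -> homog f2 g2 k D ->
  homog (sum_grading f1 f2) (sum_grading g1 g2) k (block_mx A B C D).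
Proof. by move=> *; rewrite block_mxEv; apply: homog_col; apply: homog_row. Qed.

(* The differential of the Hom complex; its signs vanish in characteristic 2. *)
Definition hdiff m p (dL : 'M['F_2]_m) (dR : 'M_p) (A : 'M_(m, p)) := dL *m A + A *m dR.

Section HomDifferential.

Variables (m p q : nat) (dL : 'M['F_2]_m) (dM : 'M['F_2]_p) (dR : 'M['F_2]_q).

Lemma hdiffD (A B : 'M_(m, p)) : hdiff dL dM (A + B) = hdiff dL dM A + hdiff dL dM B.
Proof. by rewrite /hdiff mulmxDr mulmxDl addrACA. Qed.

Lemma hdiffM (A : 'M_(m, p)) (B : 'M_(p, q)) :
  hdiff dL dR (A *m B) = hdiff dL dM A *m B + A *m hdiff dM dR B.
Proof.
rewrite /hdiff mulmxDl mulmxDr !mulmxA -addrA (addrA (A *m dM *m B)).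
by rewrite addrr_F2 add0r.
Qed.

End HomDifferential.

Lemma hdiff_cone m p (dX : 'M['F_2]_m) (dY : 'M_p) (F : 'M_(m, p))
    (a : 'M_m) (b : 'M_(m, p)) (c : 'M_(p, m)) (e : 'M_p) :
  hdiff (block_mx dX F 0 dY) (block_mx dX F 0 dY) (block_mx a b c e) =
  block_mx (hdiff dX dX a + F *m c) (hdiff dX dY b + F *m e + a *m F)
           (hdiff dY dX c) (hdiff dY dY e + c *m F).
Proof.
rewrite /hdiff !mulmx_block !mul0mx !mulmx0 !add0r !addr0 add_block_mx.
congr block_mx; first exact: addrAC; last by rewrite addrA addrAC.
by rewrite [a *m F + _]addrC addrA [dX *m b + _ + _]addrAC.
Qed.

Section DgModules.

Variable n : nat.
Implicit Types X Y Z : dgmod n.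

Lemma closed_hom_hdiff X Y F : closed_hom X Y F -> hdiff (dmx X) (dmx Y) F = 0.
Proof. by move=> [_ dF]; rewrite /hdiff dF addrr_F2. Qed.

Lemma hom_deg0 X Y k : hom_deg X Y k 0.
Proof. by split=> [|i]; [apply: homog0 | rewrite mulmx0 mul0mx]. Qed.

Lemma hom_degD X Y k F G : hom_deg X Y k F -> hom_deg X Y k G -> hom_deg X Y k (F + G).
Proof.
move=> [F0 Ft] [G0 Gt]; split=> [|i]; first exact: homogD.
by rewrite mulmxDr mulmxDl Ft Gt.
Qed.

Lemma hom_degM X Y Z k l F G :
  hom_deg X Y k F -> hom_deg Y Z l G -> hom_deg X Z (k + l) (F *m G).
Proof.
move=> [F0 Ft] [G0 Gt]; split=> [|i]; first exact: homogM F0 G0.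
by rewrite mulmxA Ft -mulmxA Gt mulmxA.
Qed.

Lemma closed_hom0 X Y : closed_hom X Y 0.
Proof. by split; [apply: hom_deg0 | rewrite mulmx0 mul0mx]. Qed.

Lemma closed_hom1 X : closed_hom X X 1%:M.
Proof.
split; last by rewrite mulmx1 mul1mx.
by split=> [|i]; [apply: homog1 | rewrite mulmx1 mul1mx].
Qed.

Lemma closed_homM X Y Z F G :
  closed_hom X Y F -> closed_hom Y Z G -> closed_hom X Z (F *m G).
Proof.
move=> [F0 Fd] [G0 Gd]; split; first exact: hom_degM F0 G0.
by rewrite mulmxA Fd -mulmxA Gd mulmxA.
Qed.

Lemma null_homotopic0 X Y : null_homotopic X Y 0.
Proof. by exists 0; split; [apply: hom_deg0 | rewrite mulmx0 mul0mx addr0]. Qed.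

Lemma dg_iso_homotopy_equiv X Y : dg_iso X Y -> homotopy_equiv X Y.
Proof.
move=> [F [G [cF cG FG GF]]]; exists F, G.
by rewrite FG GF !subrr; split=> //; apply: null_homotopic0.
Qed.

Lemma homog_cone X Y X' Y' (F : 'M_(dim X, dim Y)) (F' : 'M_(dim X', dim Y'))
    k (A : 'M_(dim X, dim X')) B C (D : 'M_(dim Y, dim Y')) :
  homog (deg X) (deg X') k A -> homog (deg X) (deg Y') (k - 1) B ->
  homog (deg Y) (deg X') (k + 1) C -> homog (deg Y) (deg Y') k D ->
  homog (deg (cone F)) (deg (cone F')) k (block_mx A B C D).
Proof.
move=> hA hB hC hD.
apply: (@homog_block _ _ _ _ (fun a => deg X a - 1) (deg Y) (fun a => deg X' a - 1)).
- by apply: (homog_regrade hA) => a b ->; lia.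
- by apply: (homog_regrade hB) => a b ->; lia.
- by apply: (homog_regrade hC) => a b ->; lia.
- exact: hD.
Qed.

Lemma hom_deg_cone X Y X' Y' (F : 'M_(dim X, dim Y)) (F' : 'M_(dim X', dim Y'))
    k (A : 'M_(dim X, dim X')) B C (D : 'M_(dim Y, dim Y')) :
  hom_deg X X' k A -> hom_deg X Y' (k - 1) B ->
  hom_deg Y X' (k + 1) C -> hom_deg Y Y' k D ->
  hom_deg (cone F) (cone F') k (block_mx A B C D).
Proof.
move=> [A0 At] [B0 Bt] [C0 Ct] [D0 Dt]; split=> [|i]; first exact: homog_cone.
by rewrite /= !mulmx_block !mulmx0 !mul0mx !addr0 !add0r At Bt Ct Dt.
Qed.

Lemma is_dgmod_cone X Y (F : 'M_(dim X, dim Y)) :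
  is_dgmod X -> is_dgmod Y -> closed_hom X Y F -> is_dgmod (cone F).
Proof.
move=> [dX1 [tX1 [dX2 [tX2 [lX [cX bX]]]]]] [dY1 [tY1 [dY2 [tY2 [lY [cY bY]]]]]].
move=> [[F0 Ft] Fd].
split; [|split; [|split; [|split; [|split; [|split]]]]] => /=.
- by apply: (homog_cone (F := F) (F' := F)); [apply: dX1 | apply: F0 | apply: homog0 | apply: dY1].
- by move=> i; apply: (homog_cone (F := F) (F' := F)); [apply: tX1 | apply: homog0 | apply: homog0 | apply: tY1].
- by rewrite mulmx_block !mulmx0 !mul0mx !addr0 !add0r dX2 dY2 Fd addrr_F2 block_mx0.
- by move=> i; rewrite mulmx_block !mulmx0 !mul0mx !addr0 !add0r tX2 tY2 block_mx0.
- move=> i; rewrite !mulmx_block !(mulmx0, mul0mx, addr0, add0r) lX lY Ft.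
  by rewrite (scalar_mx_block (dim X) (dim Y)) add_block_mx !addr0 !add0r.
- move=> i j hij; rewrite !mulmx_block !(mulmx0, mul0mx, addr0, add0r).
  by rewrite (cX _ _ hij) (cY _ _ hij).
- move=> i j hij; rewrite !mulmx_block !(mulmx0, mul0mx, addr0, add0r).
  by rewrite (bX _ _ hij) (bY _ _ hij).
Qed.

Lemma is_dgmod_shift k X : is_dgmod X -> is_dgmod (shift k X).
Proof.
move=> [d1 [t1 rest]]; split; [|split] => //=.
- by move=> a b /d1 ->; lia.
- by move=> i a b /t1 ->; lia.
Qed.

Lemma NCbar_is_dgmod X : inNCbar X -> is_dgmod X.
Proof.
elim=> {X} [M [] //|X Y F _ hX _ hY cF|//|X k _ hX].
  exact: is_dgmod_cone.
exact: is_dgmod_shift.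
Qed.

End DgModules.

Definition contractible n (X : dgmod n) := null_homotopic X X 1%:M.

Section Contractible.

Variable n : nat.
Implicit Types X Y : dgmod n.

Lemma null_homotopic_hdiff X Y F H :
  hom_deg X Y (-1) H -> hdiff (dmx X) (dmx Y) H = F -> null_homotopic X Y F.
Proof. by move=> H1 <-; exists H. Qed.

Lemma contractible_shift k X : contractible X -> contractible (shift k X).
Proof. by move=> [H [[H1 Ht] He]]; exists H; split=> //; split=> // a b /H1 /= ->; lia. Qed.

Lemma contractible_dg_iso X Y : contractible X -> dg_iso X Y -> contractible Y.
Proof.
move=> [H [H1 He]] [F [G [[F0 Fd] [G0 Gd] FG GF]]].
apply: (null_homotopic_hdiff (H := G *m H *m F)).
  by apply: hom_degM (hom_degM G0 H1) F0.
have DH : hdiff (dmx X) (dmx X) H = 1%:M := esym He.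
by rewrite !(hdiffM _ (dmx X)) (closed_hom_hdiff (conj F0 Fd)) (closed_hom_hdiff (conj G0 Gd))
  DH mul0mx mulmx0 add0r addr0 mulmx1.
Qed.

Lemma contractible_homotopy_equiv X Y :
  contractible X -> contractible Y -> homotopy_equiv X Y.
Proof.
move=> cX cY; exists 0, 0.
by rewrite !mulmx0 !sub0r !opprF2; split; try apply: closed_hom0.
Qed.

(* The standard contraction of the cone of F, built from the homotopies
   h : F G ~ 1 and k : G F ~ 1. *)
Lemma cone_homotopy_equiv_contractible X Y F G :
  closed_hom X Y F -> closed_hom Y X G ->
  null_homotopic X X (F *m G - 1%:M) -> null_homotopic Y Y (G *m F - 1%:M) ->
  contractible (cone F).
Proof.
move=> cF cG [h [h1 eh]] [k [k1 ek]].
set dX := dmx X in eh; set dY := dmx Y in ek.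
have Dh : hdiff dX dX h = F *m G + 1%:M by rewrite /hdiff -eh opprF2.
have Dk : hdiff dY dY k = G *m F + 1%:M by rewrite /hdiff -ek opprF2.
have DF : hdiff dX dY F = 0 := closed_hom_hdiff cF.
have DG : hdiff dY dX G = 0 := closed_hom_hdiff cG.
pose Phi := F *m k + h *m F.
have Phi1 : hom_deg X Y (-1) Phi.
  by apply: hom_degD; [apply: hom_degM cF.1 k1 | apply: hom_degM h1 cF.1].
have DPhi : hdiff dX dY Phi = 0.
  rewrite hdiffD (hdiffM _ dY) (hdiffM _ dX) DF Dh Dk mul0mx mulmx0 add0r addr0.
  by rewrite mulmxDr mulmxDl mulmx1 mul1mx mulmxA addrr_F2.
apply: (null_homotopic_hdiff (X := cone F) (Y := cone F)
  (H := block_mx h (h *m Phi) G (k + G *m Phi))).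
  apply: hom_deg_cone; [exact: h1 | exact: hom_degM h1 Phi1 | exact: cG.1 |].
  by apply: hom_degD => //; apply: hom_degM cG.1 Phi1.
rewrite /= hdiff_cone (scalar_mx_block (dim X) (dim Y)); congr block_mx.
- by rewrite Dh addrAC addrr_F2 add0r.
- rewrite (hdiffM _ dX) DPhi mulmx0 addr0 Dh (mulmxDl _ _ Phi) mul1mx.
  rewrite (mulmxDr F k) mulmxA [_ + F *m G *m Phi]addrC addrACA addrr_F2 add0r.
  by rewrite -addrA -/Phi addrr_F2.
- by [].
- rewrite hdiffD (hdiffM _ dX) DG DPhi mul0mx mulmx0 !addr0 Dk.
  by rewrite addrAC addrr_F2 add0r.
Qed.

Lemma contractible_cone X Y F :
  contractible X -> contractible Y -> closed_hom X Y F -> contractible (cone F).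
Proof.
move=> cX cY cF; apply: (cone_homotopy_equiv_contractible (G := 0)) => //.
- exact: closed_hom0.
- by rewrite mulmx0 sub0r opprF2.
- by rewrite mul0mx sub0r opprF2.
Qed.

Lemma contractible_cone1 X : contractible (cone (1%:M : 'M_(dim X))).
Proof.
apply: (cone_homotopy_equiv_contractible (G := 1%:M)); try exact: closed_hom1.
all: by rewrite mulmx1 subrr; apply: null_homotopic0.
Qed.

Lemma cone0_homotopy_equiv_shift X Y :
  contractible Y -> homotopy_equiv (cone (0 : 'M_(dim X, dim Y))) (shift 1 X).
Proof.
move=> [h [h1 eh]].
exists (col_mx 1%:M 0), (row_mx 1%:M 0); split.
- split; last by rewrite /= mul_block_col mul_col_mx !(mulmx0, mul0mx, addr0) mulmx1 mul1mx.
  split=> [|i]; last by rewrite /= mul_block_col mul_col_mx !(mulmx0, mul0mx, addr0) mulmx1 mul1mx.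
  apply: homog_col; last exact: homog0.
  exact: (@homog1 _ (fun a => deg X a - 1)).
- split; last by rewrite /= mul_row_block mul_mx_row !(mulmx0, mul0mx, addr0) mulmx1 mul1mx.
  split=> [|i]; last by rewrite /= mul_row_block mul_mx_row !(mulmx0, mul0mx, addr0) mulmx1 mul1mx.
  apply: homog_row; last exact: homog0.
  exact: (@homog1 _ (fun a => deg X a - 1)).
- rewrite mul_col_row (scalar_mx_block (dim X) (dim Y)) mulmx1 !mulmx0 mul0mx.
  rewrite opp_block_mx add_block_mx subrr !oppr0 !addr0 add0r opprF2.
  apply: (null_homotopic_hdiff (X := cone 0) (Y := cone 0) (H := block_mx 0 0 0 h)).
    by apply: hom_deg_cone => //; apply: hom_deg0.
  by rewrite /= hdiff_cone /hdiff !(mulmx0, mul0mx, addr0) -eh.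
- by rewrite mul_row_col mulmx1 mulmx0 addr0 subrr; apply: null_homotopic0.
Qed.

End Contractible.

Lemma deg0_cycle_homog n (M : dgmod n) g :
  deg0_cycle M g -> homog (fun _ : 'I_1 => 0) (deg M) 0 g.
Proof. by move=> [g0 _] i a; rewrite ord1 => /g0 ->. Qed.

Section ConeOfIdentity.

Variables (n : nat) (M : dgmod n).
Let N := cone (1%:M : 'M_(dim (shift (-1) M))).

Lemma closed_hom_cone1_shift (Z : dgmod n) (A : 'M_(dim Z, dim M)) B :
  closed_hom Z N (row_mx A B) ->
  [/\ closed_hom Z M A, hom_deg Z M (-1) B & hdiff (dmx Z) (dmx M) B = A].
Proof.
move=> [[AB0 ABt] ABd].
have tAB i : tau Z i *m A = A *m tau M i /\ tau Z i *m B = B *m tau M i.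
  move: (ABt i); rewrite /= mul_mx_row mul_row_block !(mulmx0, addr0, add0r).
  by move/eq_row_mx.
move: ABd; rewrite /= mul_mx_row mul_row_block !(mulmx0, addr0) mulmx1.
move=> /eq_row_mx [dA dB]; split.
- split=> //; split=> [a b|i]; last by case: (tAB i).
  by have := homog_lsub AB0; rewrite row_mxKl => /(_ a b) hA /hA /=; lia.
- split=> [a b|i]; last by case: (tAB i).
  by have := homog_rsub AB0; rewrite row_mxKr => /(_ a b) hB /hB /=; lia.
- by rewrite /hdiff dB -addrA addrr_F2 addr0.
Qed.

Lemma deg0_cycle_cone1_shift (i : 'I_n.-1) g :
  is_dgmod M -> deg0_cycle M g -> deg0_cycle N (row_mx g (g *m tau M i)).
Proof.
move=> [_ [tM1 [_ [_ [lM _]]]]] gM; have [_ gd] := gM.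
split.
  have yN : homog (fun _ : 'I_1 => 0) (deg N) 0 (row_mx g (g *m tau M i)).
    apply: homog_row.
      by apply: (homog_regrade (deg0_cycle_homog gM)) => a b /= ->; lia.
    by apply: (homog_regrade (homogM (deg0_cycle_homog gM) (tM1 i))) => a b /= ->; lia.
  by move=> a /yN ->; rewrite addr0.
rewrite /= mul_row_block gd mulmx0 addr0 mulmx1 -mulmxA lM.
by rewrite mulmxDr mulmx1 mulmxA gd mul0mx addr0 addrr_F2 row_mx0.
Qed.

End ConeOfIdentity.

Section FreeModule.

Variables (n : nat) (M : dgmod n) (g : 'rV['F_2]_(dim M)).
Hypothesis M_dg : is_dgmod M.
Hypothesis gM : deg0_cycle M g.
Hypothesis univM : forall N : dgmod n, is_dgmod N -> forall y, deg0_cycle N y ->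
  exists! F : 'M_(dim M, dim N), closed_hom M N F /\ g *m F = y.

Lemma free_closed_endo_eq1 A : closed_hom M M A -> g *m A = g -> A = 1%:M.
Proof.
move=> cA gA; have [F [_ uF]] := univM M_dg gM.
by rewrite -(uF A (conj cA gA)) (uF 1%:M (conj (closed_hom1 M) (mulmx1 g))).
Qed.

(* The universal property yields a module map M -> Cone(1_{M[-1]}) sending the
   generator to (g, g tau_1); its second component is a contracting homotopy,
   i.e. right multiplication by tau_1, for which d(tau_1) = 1. *)
Lemma free_NC_contractible : (2 <= n)%N -> contractible M.
Proof.
move=> n2; have i0 : 'I_n.-1 by exists 0%N; lia.
pose N := cone (1%:M : 'M_(dim (shift (-1) M))).
have N_dg : is_dgmod N.
  by apply: is_dgmod_cone; [apply: is_dgmod_shift.. | apply: closed_hom1].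
have [p [[cp gp] _]] := univM N_dg (deg0_cycle_cone1_shift i0 M_dg gM).
rewrite -[p]hsubmxK in cp gp.
have [cA B1 DB] := closed_hom_cone1_shift cp.
move: gp; rewrite mul_mx_row => /eq_row_mx [gA _].
rewrite (free_closed_endo_eq1 cA gA) in DB.
exact: null_homotopic_hdiff B1 DB.
Qed.

End FreeModule.

Definition sgn (k : int) : int := (-1) ^ k.

Lemma sgnD a b : sgn (a + b) = sgn a * sgn b.
Proof. by rewrite /sgn exprzDr // unitrN1. Qed.

Lemma sgnN k : sgn (- k) = sgn k.
Proof. by rewrite /sgn -exprz_inv invrN1. Qed.

Lemma sgnS k : sgn (k + 1) = - sgn k.
Proof. by rewrite sgnD /sgn expr1z mulrN1. Qed.

Lemma telescope (w R : nat -> int) : (forall i, w i.+1 = - w i) ->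
  forall M, \sum_(i < M) w i * (R i.+1 + R i) = w 0%N * R 0%N - w M * R M.
Proof.
move=> wS; elim=> [|M IH]; first by rewrite big_ord0 subrr.
by rewrite big_ord_recr /= IH wS; ring.
Qed.

Definition grade_dim N (dg : 'I_N -> int) (k : int) : nat := \sum_a (dg a == k).

Lemma sum_sgn_window N (dg : 'I_N -> int) (lo : int) (M : nat) :
    (forall a, lo <= dg a < lo + M%:Z) ->
  \sum_a sgn (dg a) = \sum_(i < M) sgn (lo + i%:Z) * (grade_dim dg (lo + i%:Z))%:R.
Proof.
move=> win; under [RHS]eq_bigr => i _ do rewrite /grade_dim natr_sum mulr_sumr.
rewrite exchange_big; apply: eq_bigr => a _.
have ia : (absz (dg a - lo) < M)%N by have := win a; lia.
rewrite (bigD1 (Ordinal ia)) //= big1 => [|i ne].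
  have -> : lo + (absz (dg a - lo))%:Z = dg a by have := win a; lia.
  by rewrite eqxx mulr1 addr0.
have -> : (dg a == lo + i%:Z) = false; last by rewrite mulr0.
by apply/negbTE/eqP => dgi; move/eqP: ne; apply; apply: val_inj => /=; lia.
Qed.

Lemma rank_diag (F : fieldType) N (v : 'rV[F]_N) :
  \rank (diag_mx v) = (\sum_(a < N) (v ord0 a != 0%R))%N.
Proof.
elim: N v => [|N IH] v.
  by rewrite big_ord0; apply/eqP; rewrite -leqn0 rank_leq_row.
move: v; rewrite -[N.+1]/(1 + N)%N => v.
rewrite -[v]hsubmxK diag_mx_row rank_diag_block_mx IH big_split_ord /=.
congr (_ + _)%N; last by apply: eq_bigr => i _; rewrite row_mxEr.
have -> : diag_mx (lsubmx v) = lsubmx v.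
  by apply/matrixP => i j; rewrite !ord1 mxE eqxx mulr1n.
rewrite rank_rV big_ord1 row_mxEl; congr nat_of_bool.
congr negb; apply/eqP/eqP => [-> | v0]; first by rewrite mxE.
apply/matrixP => -[[|//] ?] [[|//] ?]; rewrite [RHS]mxE -v0.
by congr (lsubmx v _ _); apply: val_inj.
Qed.

Section GradedMatrices.

Variables (N : nat) (dg : 'I_N -> int).

Definition grade_proj k : 'M['F_2]_N := diag_mx (\row_a (dg a == k)%:R).

Lemma rank_grade_proj k : \rank (grade_proj k) = grade_dim dg k.
Proof. by rewrite rank_diag; apply: eq_bigr => a _; rewrite mxE; case: (dg a == k). Qed.

Lemma grade_proj0 k : (forall a, dg a != k) -> grade_proj k = 0.
Proof. by move=> dgk; apply/matrixP => a b; rewrite !mxE (negbTE (dgk a)) mul0rn. Qed.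

Lemma grade_projM k l (A : 'M_N) :
  homog dg dg l A -> grade_proj k *m A = A *m grade_proj (k + l).
Proof.
move=> hA; apply/matrixP => a b; rewrite mul_diag_mx mul_mx_diag !mxE.
case: (eqVneq (A a b) 0) => [->|/hA ->]; first by rewrite mulr0 mul0r.
by rewrite mulrC; congr (_ * _%:R); apply/eqP/eqP; lia.
Qed.

Variables (d H : 'M['F_2]_N).
Hypotheses (d1 : homog dg dg 1 d) (H1 : homog dg dg (-1) H).
Hypotheses (dd : d *m d = 0) (dH : hdiff d d H = 1%:M).

Let r k := \rank (grade_proj k *m d).

(* Since d H + H d = 1, the degree-k cycles are exactly the boundaries from
   degree k - 1; this is rank-nullity for d on the degree-k piece. *)
Lemma rank_grade_proj_contractible k : \rank (grade_proj k) = (r k + r (k - 1)%R)%N.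
Proof.
apply/eqP; rewrite eqn_leq; apply/andP; split.
  have -> : grade_proj k = (grade_proj k *m d) *m H + H *m (grade_proj (k - 1) *m d).
    by rewrite -{1}[grade_proj k]mulmx1 -dH mulmxDr !mulmxA (grade_projM _ H1).
  apply: (leq_trans (mxrank_add _ _)).
  by apply: leq_add; [apply: mxrankM_maxl | apply: mxrankM_maxr].
rewrite -(mxrank_mul_ker (grade_proj k) d) leq_add2l; apply: mxrankS.
rewrite sub_capmx; apply/andP; split.
  by rewrite (grade_projM _ d1) subrK submxMl.
by apply/sub_kermxP; rewrite -mulmxA dd mulmx0.
Qed.

Lemma sum_sgn_contractible : \sum_a sgn (dg a) = 0.
Proof.
pose B := (\sum_a absz (dg a))%N.
have dgB a : (absz (dg a) <= B)%N by rewrite /B (bigD1 a) //= leq_addr.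
pose lo : int := - B%:Z - 1; pose M := (2 * B + 3)%N.
rewrite (@sum_sgn_window _ _ lo M); last by move=> a; have := dgB a; lia.
pose R j := (r (lo + j%:Z - 1))%:Z.
under eq_bigr => i _.
  rewrite -rank_grade_proj rank_grade_proj_contractible natrD !natz.
  have -> : (r (lo + i%:Z))%:Z = R i.+1 by rewrite /R; congr (Posz (r _)); lia.
  over.
rewrite (telescope (w := fun i => sgn (lo + i%:Z))); last by move=> i; rewrite -sgnS; congr sgn; lia.
have r0 k : (forall a, dg a != k) -> r k = 0%N.
  by move/grade_proj0; rewrite /r => ->; rewrite mul0mx mxrank0.
rewrite /R !r0 ?mulr0 ?subrr // => a; apply/eqP; have := dgB a; rewrite /lo /M; lia.
Qed.

End GradedMatrices.

Definition chi n (X : dgmod n) : int := \sum_(a < dim X) sgn (deg X a).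

Section EulerCharacteristic.

Variable n : nat.
Implicit Types X Y : dgmod n.

Lemma chi_cone X Y (F : 'M_(dim X, dim Y)) : chi (cone F) = chi Y - chi X.
Proof.
rewrite /chi /= big_split_ord /= addrC -sumrN; congr (_ + _); apply: eq_bigr => a _.
  by rewrite (unsplitK (inr _ a)).
by rewrite (unsplitK (inl _ a)) sgnD sgnN /sgn expr1z mulrN1.
Qed.

Lemma chi_shift k X : chi (shift k X) = sgn k * chi X.
Proof. by rewrite /chi mulr_sumr; apply: eq_bigr => a _; rewrite /= sgnD sgnN mulrC. Qed.

Lemma chi_contractible X : is_dgmod X -> contractible X -> chi X = 0.
Proof. by move=> [d1 [_ [dd _]]] [H [[H1 _] dH]]; apply: sum_sgn_contractible d1 H1 dd (esym dH). Qed.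

Lemma chi_homotopy_equiv X Y :
  is_dgmod X -> is_dgmod Y -> homotopy_equiv X Y -> chi X = chi Y.
Proof.
move=> X_dg Y_dg [F [G [cF cG hFG hGF]]].
have := chi_contractible (is_dgmod_cone X_dg Y_dg cF)
  (cone_homotopy_equiv_contractible cF cG hFG hGF).
by rewrite chi_cone => /eqP; rewrite subr_eq0 => /eqP.
Qed.

End EulerCharacteristic.

Lemma NCbar_contractible n (X : dgmod n) : (2 <= n)%N -> inNCbar X -> contractible X.
Proof.
move=> n2; elim=> {X} [M [M_dg [g [gM univM]]]|X Y F _ cX _ cY cF|X Y _ cX _|X k _ cX].
- exact: free_NC_contractible univM n2.
- exact: contractible_cone.
- exact: contractible_dg_iso.
- exact: contractible_shift.
Qed.

(* For n <= 1 there are no generators tau_i, and NC_n is F_2 in degree 0. *)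
Definition F2_dgmod n : dgmod n := @DGMod n 1 (fun _ => 0) 0 (fun _ => 0).

Section SmallRank.

Variable n : nat.
Hypothesis n_le1 : (n <= 1)%N.

Lemma no_tau (i : 'I_n.-1) : False.
Proof. by case: i => i /=; lia. Qed.

Lemma is_dgmod_F2 : is_dgmod (F2_dgmod n).
Proof.
by rewrite /is_dgmod /= mulmx0; repeat split; try exact: homog0; move=> i; case: (no_tau i).
Qed.

Lemma closed_hom_from_F2 (N : dgmod n) y : deg0_cycle N y -> closed_hom (F2_dgmod n) N y.
Proof.
move=> yN; have [_ yd] := yN; split; last by rewrite /= mul0mx yd.
by split=> [|i]; [apply: deg0_cycle_homog | case: (no_tau i)].
Qed.

Lemma is_free_NC_F2 : is_free_NC (F2_dgmod n).
Proof.
split; first exact: is_dgmod_F2.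
exists 1%:M; split; first by split=> [a|]; [rewrite ord1 | rewrite /= mulmx0].
move=> N _ y yN; exists y; split; first by rewrite mul1mx; split=> //; apply: closed_hom_from_F2.
by move=> F [_ <-]; rewrite mul1mx.
Qed.

Lemma free_NC_dg_iso_F2 (M : dgmod n) : is_free_NC M -> dg_iso M (F2_dgmod n).
Proof.
move=> [M_dg [g [gM univM]]].
have c1 : deg0_cycle (F2_dgmod n) 1%:M by split=> [a|]; [rewrite ord1 | rewrite /= mulmx0].
have [F [[cF gF] _]] := univM _ is_dgmod_F2 _ c1.
have cg := closed_hom_from_F2 gM.
exists F, g; split=> //.
by apply: (free_closed_endo_eq1 M_dg gM univM (closed_homM cF cg)); rewrite mulmxA gF mul1mx.
Qed.

End SmallRank.

Lemma shift_shift n a b (X : dgmod n) : shift a (shift b X) = shift (b + a) X.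
Proof. by congr DGMod; apply: functional_extensionality => x; rewrite opprD addrA. Qed.

Lemma shift0 n (X : dgmod n) : shift 0 X = X.
Proof. by case: X => ? dg ? ?; congr DGMod; apply: functional_extensionality => x; rewrite subr0. Qed.

Section AdditiveInvariants.

Variables (n : nat) (G : zmodType) (f : dgmod n -> G).
Hypothesis fK : K0_invariant G f.

Lemma K0_invariant_cone1 X : inNCbar X -> f (cone (1%:M : 'M_(dim X))) = 0.
Proof.
by move=> hX; have := fK.2 X X _ hX hX (closed_hom1 X); rewrite -{1}[f X]addr0 => /addrI.
Qed.

(* The triangle X -> Cone(1_X) -> Cone(0) with Cone(1_X) ~ 0 and Cone(0) ~ X[1]. *)
Lemma K0_invariant_shift1 X : inNCbar X -> f (shift 1 X) = - f X.
Proof.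
move=> hX; pose C := cone (1%:M : 'M_(dim X)).
have hC : inNCbar C by apply: NCbar_cone => //; apply: closed_hom1.
have hZ : inNCbar (cone (0 : 'M_(dim X, dim C))) by apply: NCbar_cone => //; apply: closed_hom0.
have := fK.2 _ _ _ hX hC (closed_hom0 X C); rewrite K0_invariant_cone1 // => /esym/eqP.
rewrite addrC addr_eq0 => /eqP <-; apply/esym/fK.1 => //; first exact: NCbar_shift.
exact/cone0_homotopy_equiv_shift/contractible_cone1.
Qed.

Lemma K0_invariant_shift k X : inNCbar X -> f (shift k X) = f X *~ sgn k.
Proof.
move=> hX; elim/int_rect: k => [|k IH|k IH]; first by rewrite shift0 /sgn expr0z mulr1z.
  by rewrite -addn1 PoszD -shift_shift K0_invariant_shift1 ?IH ?sgnS ?mulrNz //; apply: NCbar_shift.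
have hX' : inNCbar (shift (- k.+1%:Z) X) by apply: NCbar_shift.
apply: oppr_inj; rewrite -K0_invariant_shift1 // shift_shift.
rewrite (_ : - k.+1%:Z + 1 = - k%:Z) ?IH; last by lia.
by rewrite -mulrNz -sgnS; congr (_ *~ sgn _); lia.
Qed.

End AdditiveInvariants.

Lemma K0_invariant_eq0 n (G : zmodType) (f : dgmod n -> G) X :
  (2 <= n)%N -> K0_invariant G f -> inNCbar X -> f X = 0.
Proof.
move=> n2 fK hX; have hC : inNCbar (cone (1%:M : 'M_(dim X))).
  by apply: NCbar_cone => //; apply: closed_hom1.
rewrite -(K0_invariant_cone1 fK hX); apply: fK.1 => //.
by apply: contractible_homotopy_equiv; apply: NCbar_contractible.
Qed.

Lemma K0_invariant_chi_int n : K0_invariant int (@chi n).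
Proof.
split=> [X Y hX hY|X Y F _ _ _]; last by rewrite chi_cone addrC subrK.
by apply: chi_homotopy_equiv; apply: NCbar_is_dgmod.
Qed.

Lemma chi_F2 n : chi (F2_dgmod n) = 1.
Proof. by rewrite /chi big_ord1 /sgn expr0z. Qed.

Lemma K0_invariant_chi n (G : zmodType) (f : dgmod n -> G) X : (n <= 1)%N ->
  K0_invariant G f -> inNCbar X -> f X = f (F2_dgmod n) *~ chi X.
Proof.
move=> n1 fK; have [fH _] := fK; have [chiH _] := K0_invariant_chi_int n.
have hF2 : inNCbar (F2_dgmod n) by apply/NCbar_free/is_free_NC_F2.
elim=> {X} [M freeM|X Y F hX IHX hY IHY cF|X Y hX IHX Y_dg isoXY|X k hX IHX].
- have hM : inNCbar M by apply: NCbar_free.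
  have heq := dg_iso_homotopy_equiv (free_NC_dg_iso_F2 n1 freeM).
  by rewrite (fH _ _ hM hF2 heq) (chiH _ _ hM hF2 heq) chi_F2.
- by rewrite chi_cone mulrzBr -IHX -IHY (fK.2 _ _ _ hX hY cF) addrC addKr.
- have hY : inNCbar Y by apply: NCbar_iso isoXY.
  have heq := dg_iso_homotopy_equiv isoXY.
  by rewrite -(fH _ _ hX hY heq) -(chiH _ _ hX hY heq).
- by rewrite (K0_invariant_shift fK) // chi_shift IHX mulrC mulrzA.
Qed.

Lemma K0_iso_Z_le1 n : (n <= 1)%N -> K0_iso_Z n.
Proof.
move=> n1; exists (@chi n); split=> [|G f fK]; first exact: K0_invariant_chi_int.
exists (f (F2_dgmod n)); split=> [X|g fg]; first exact: K0_invariant_chi.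
by rewrite fg ?chi_F2 //; apply/NCbar_free/is_free_NC_F2.
Qed.

Lemma K0F2_invariantE n (V : lmodType 'F_2) (f : dgmod n -> V) :
  K0F2_invariant V f <-> K0_invariant V f.
Proof.
split=> -[fH fC]; split=> // X Y F hX hY cF; have := fC X Y F hX hY cF.
  by rewrite addrAC => /addr_eq0F2 <-.
by move=> ->; rewrite addrA addrr_F2 add0r addrr_F2.
Qed.

Lemma K0F2_iso_F2_le1 n : (n <= 1)%N -> K0F2_iso_F2 n.
Proof.
move=> n1; pose chi2 (X : dgmod n) : GRing.regular 'F_2 := (chi X)%:~R.
have [chiH chiC] := K0_invariant_chi_int n.
exists chi2; split=> [|V f /K0F2_invariantE fK].
  apply/K0F2_invariantE; split=> [X Y hX hY heq|X Y F hX hY cF].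
    by rewrite /chi2 (chiH X Y).
  by rewrite /chi2 (chiC X Y F) //; apply: intrD.
exists (f (F2_dgmod n)); split=> [X hX|v fv]; first by rewrite scaler_int; apply: K0_invariant_chi.
by rewrite fv /chi2 ?chi_F2 ?scale1r //; apply/NCbar_free/is_free_NC_F2.
Qed.

Theorem corollary2 (n : nat) :
  ((n <= 1)%N -> K0_iso_Z n /\ K0F2_iso_F2 n) /\
  ((2 <= n)%N -> K0_zero n /\ K0F2_zero n).
Proof.
split=> [n1 | n2]; first by split; [apply: K0_iso_Z_le1 | apply: K0F2_iso_F2_le1].
split=> [G f fK | V f /K0F2_invariantE fK] X; exact: K0_invariant_eq0.
Qed.
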